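(* Let $M$ be a finite monoid. Every filtered left $M$-set is isomorphic (as a left $M$-set) to $M/K$ for a suitable saturated $F$-submonoid $K$ of $M$.
   Context: A left $M$-set $A$ is filtered if (F1) $A\neq\emptyset$; (F2) if $m_1a=m_2a$ ($m_i\in M,a\in A$) then there are $m\in M,\tilde a\in A$ with $m\tilde a=a$, $m_1m=m_2m$; (F3) for $a_1,a_2\in A$ there are $m_1,m_2\in M$, $a\in A$ with $m_ia=a_i$. A monoid $K$ is an $F$-monoid if for any $m,n\in K$ there exists $x\in K$ with $mx=nx$; an $F$-submonoid is a submonoid that is an $F$-monoid. A submonoid $K\subseteq M$ is saturated if whenever $m\in M$ and $mx=x$ for some $x\in K$, then $m\in K$. For an $F$-submonoid $K$, $M/K$ is the quotient of $M$ by the equivalence relation $m\sim_K n\iff \exists x\in K: mx=nx$, with left $M$-action induced by left multiplication. *)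

From mathcomp Require Import all_boot.
Set Implicit Arguments. Unset Strict Implicit. Unset Printing Implicit Defensive.

Record finMonoid := FinMonoid {
  mcar :> finType;
  mmul : mcar -> mcar -> mcar;
  mone : mcar;
  mmulA : forall x y z, mmul x (mmul y z) = mmul (mmul x y) z;
  mmul1m : forall x, mmul mone x = x;
  mmulm1 : forall x, mmul x mone = x }.

Section Defs.
Variable M : finMonoid.
Local Notation "x * y" := (mmul x y).
Local Notation "1" := (mone M).

Definition is_left_action (A : Type) (act : M -> A -> A) : Prop :=
  (forall a, act 1 a = a) /\ (forall m n a, act (m * n) a = act m (act n a)).

(* Filtered left M-sets, axioms (F1)-(F3). *)
Definition filtered (A : Type) (act : M -> A -> A) : Prop :=
  [/\ (exists a : A, True),
      (forall (m1 m2 : M) (a : A), act m1 a = act m2 a ->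
         exists (m : M) (a' : A), act m a' = a /\ m1 * m = m2 * m)
    & (forall a1 a2 : A, exists (m1 m2 : M) (a : A),
         act m1 a = a1 /\ act m2 a = a2)].

Definition submonoid (K : {set M}) : Prop :=
  1 \in K /\ (forall x y, x \in K -> y \in K -> x * y \in K).

Definition F_submonoid (K : {set M}) : Prop :=
  submonoid K /\ (forall m n, m \in K -> n \in K -> exists2 x, x \in K & m * x = n * x).

Definition saturated (K : {set M}) : Prop :=
  forall m x : M, x \in K -> m * x = x -> m \in K.

Definition simK (K : {set M}) (m n : M) : bool := [exists x in K, m * x == n * x].
Definition clsK (K : {set M}) (m : M) : {set M} := [set n | simK K m n].

Definition quotK (K : {set M}) := {C : {set M} | C \in [set clsK K m | m : M]}.

Lemma clsK_in (K : {set M}) (m : M) : clsK K m \in [set clsK K m | m : M].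
Proof. by apply/imsetP; exists m. Qed.

Definition qclass (K : {set M}) (m : M) : quotK K := exist _ (clsK K m) (clsK_in K m).

Definition qrepr (K : {set M}) (C : quotK K) : M := odflt 1 [pick n in val C].

Definition qact (K : {set M}) (m : M) (C : quotK K) : quotK K :=
  qclass K (m * qrepr C).

End Defs.

(* For c in A, the orbit M.c is measured by the number of fibres
   of m |-> m.c, a quantity bounded by #|{set M}|.  Pick c with the largest
   orbit.  For any b, axiom (F3) gives d with c = p.d and b = q.d; then
   M.c is contained in M.d, and maximality forces equality, so b lies in M.c:
   c is a generator a0 of A.  Let K be the stabiliser of a0.  Using (F2) and
   the generator, m ~_K n holds exactly when m.a0 = n.a0; hence K is a
   saturated F-submonoid and b = m.a0 |-> [m] is an equivariant bijection
   A -> M/K. *)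

From mathcomp Require Import all_boot.
From Stdlib Require ClassicalEpsilon.

Set Implicit Arguments. Unset Strict Implicit. Unset Printing Implicit Defensive.

(* A classical boolean reflection of an arbitrary proposition; needed since
   the elements of A have no decidable equality. *)
Definition dec (P : Prop) : bool :=
  if ClassicalEpsilon.excluded_middle_informative P then true else false.

Lemma decP (P : Prop) : reflect P (dec P).
Proof. by rewrite /dec; case: ClassicalEpsilon.excluded_middle_informative; constructor. Qed.

Section ImageSize.
Variables (T : finType) (B : Type).

(* The fibre of f over b, and the number of nonempty fibres of f: the size
   of the image of f, measured inside the finite type {set T}. *)
Definition fiber (f : T -> B) (b : B) : {set T} := [set t | dec (f t = b)].
Definition fibers (f : T -> B) : {set {set T}} := [set fiber f (f t) | t : T].
Definition image_size (f : T -> B) : nat := #|fibers f|.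

Lemma mem_fiber f b t : (t \in fiber f b) <-> f t = b.
Proof. by rewrite inE; split => /decP. Qed.

Lemma fiber_inj f b b' t : fiber f b = fiber f b' -> f t = b -> b = b'.
Proof.
move=> Efib ftb; have : t \in fiber f b by apply/mem_fiber.
by rewrite Efib => /mem_fiber <-.
Qed.

Variables f g : T -> B.
Hypothesis image_sub : forall t, exists u, f t = g u.

(* Sending the f-fibre over f t to the g-fibre over f t injects the fibres
   of f into those of g. *)
Let embed (S : {set T}) : {set T} :=
  if [pick t in S] is Some t then fiber g (f t) else set0.

Let embedE t : embed (fiber f (f t)) = fiber g (f t).
Proof.
rewrite /embed; case: pickP => [u /mem_fiber -> // | none].
by have /negbT/negP[] := none t; apply/mem_fiber.
Qed.

Let embed_sub : embed @: fibers f \subset fibers g.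
Proof.
apply/subsetP => _ /imsetP[_ /imsetP[t _ ->] ->]; rewrite embedE.
by have [u ->] := image_sub t; apply/imsetP; exists u.
Qed.

Let embed_inj : {in fibers f &, injective embed}.
Proof.
move=> _ _ /imsetP[t _ ->] /imsetP[t' _ ->]; rewrite !embedE => Efib.
have [u ftu] := image_sub t.
by rewrite -(fiber_inj Efib (esym ftu)).
Qed.

Lemma image_size_le : image_size f <= image_size g.
Proof. by rewrite /image_size -(card_in_imset embed_inj) subset_leq_card. Qed.

Lemma image_size_eq : image_size f = image_size g -> forall u, exists t, g u = f t.
Proof.
move=> Esize u.
have Ecard : #|embed @: fibers f| = #|fibers g| by rewrite card_in_imset.
have : fiber g (g u) \in embed @: fibers f.
  by rewrite (subset_cardP Ecard embed_sub); apply/imsetP; exists u.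
case/imsetP => _ /imsetP[t _ ->]; rewrite embedE => Efib.
by exists t; apply: (fiber_inj Efib).
Qed.

End ImageSize.

Section Generator.
Variables (M : finMonoid) (A : Type) (act : M -> A -> A).
Local Notation "x * y" := (mmul x y).
Hypothesis act_mul : forall m n a, act (m * n) a = act m (act n a).
Hypothesis filt : filtered act.

Definition orbit_size (c : A) : nat := image_size (act^~ c).

Lemma orbit_size_act p c :
  orbit_size (act p c) <= orbit_size c /\
  (orbit_size (act p c) = orbit_size c -> forall m, exists n, act m c = act n (act p c)).
Proof.
have sub : forall m, exists n, act m (act p c) = act n c.
  by move=> m; exists (m * p); rewrite act_mul.
by split; [apply: image_size_le | apply: image_size_eq].
Qed.

(* A filtered M-set over a finite monoid is cyclic: an element of maximal
   orbit size generates it. *)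
Lemma filtered_generator : exists a0, forall b, exists m, act m a0 = b.
Proof.
have [[a _] _ common_ancestor] := filt.
pose attained k := dec (exists c, orbit_size c = k).
have attained_a : exists k, attained k by exists (orbit_size a); apply/decP; exists a.
have bounded k : attained k -> k <= #|{set M}|.
  by move=> /decP[c <-]; apply: max_card.
have [_ /decP[a0 <-] a0_max] := ex_maxnP attained_a bounded.
exists a0 => b.
have [p [q [d [pd qd]]]] := common_ancestor a0 b; subst a0 b.
have [le_pd eq_pd] := orbit_size_act p d.
have le_dp : orbit_size d <= orbit_size (act p d) by apply: a0_max; apply/decP; exists d.
have [n En] := eq_pd (anti_leq (introT andP (conj le_pd le_dp))) q.
by exists n; rewrite -En.
Qed.

End Generator.

Section Stabiliser.
Variables (M : finMonoid) (A : Type) (act : M -> A -> A).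
Local Notation "x * y" := (mmul x y).
Hypothesis act_one : forall a, act (mone M) a = a.
Hypothesis act_mul : forall m n a, act (m * n) a = act m (act n a).
Hypothesis filt : filtered act.
Variable a0 : A.
Hypothesis generates : forall b, exists m, act m a0 = b.

Definition stab : {set M} := [set m | dec (act m a0 = a0)].

Lemma mem_stab m : m \in stab <-> act m a0 = a0.
Proof. by rewrite inE; split => /decP. Qed.

(* The key fact: m ~_K n holds exactly when m and n agree on a0.  The
   backward direction uses (F2) and then reaches the witness from a0. *)
Lemma simK_stabP m n : reflect (act m a0 = act n a0) (simK stab m n).
Proof.
apply: (iffP existsP) => [[x /andP[/mem_stab ax /eqP mxnx]] | Emn].
  by rewrite -ax -!act_mul mxnx.
have [_ F2 _] := filt.
have [p [a' [pa' mpnp]]] := F2 _ _ _ Emn.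
have [q qa0] := generates a'.
exists (p * q); apply/andP; split; first by apply/mem_stab; rewrite act_mul qa0.
by rewrite !mmulA mpnp.
Qed.

Lemma stab_F_submonoid : F_submonoid stab.
Proof.
split; first split.
- by apply/mem_stab; rewrite act_one.
- by move=> x y /mem_stab ax /mem_stab ay; apply/mem_stab; rewrite act_mul ay ax.
move=> m n /mem_stab am /mem_stab an.
have : simK stab m n by apply/simK_stabP; rewrite am an.
by case/existsP => x /andP[kx /eqP mxnx]; exists x.
Qed.

Lemma stab_saturated : saturated stab.
Proof. by move=> m x /mem_stab ax mxx; apply/mem_stab; rewrite -{1}ax -act_mul mxx. Qed.

Lemma qclass_eq m n : act m a0 = act n a0 -> qclass stab m = qclass stab n.
Proof.
move=> Emn; apply: val_inj; apply/setP => k; rewrite !inE.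
by apply/simK_stabP/simK_stabP => <-.
Qed.

Lemma qrepr_act m : act (qrepr (qclass stab m)) a0 = act m a0.
Proof.
rewrite /qrepr /=; case: pickP => [n | none].
  by rewrite inE => /simK_stabP ->.
by have /negbT/negP[] := none m; rewrite inE; apply/simK_stabP.
Qed.

Lemma qclass_surj (C : quotK stab) : exists m, C = qclass stab m.
Proof.
case: C => S memS; have /imsetP[m _ Sm] := memS.
by exists m; apply: val_inj; exact: Sm.
Qed.

Definition coord (b : A) : M :=
  proj1_sig (ClassicalEpsilon.constructive_indefinite_description _ (generates b)).

Lemma coordE b : act (coord b) a0 = b.
Proof. by rewrite /coord; case: ClassicalEpsilon.constructive_indefinite_description. Qed.

Lemma orbit_iso : exists f : A -> quotK stab, bijective f /\
  (forall (m : M) (a : A), f (act m a) = qact m (f a)).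
Proof.
exists (fun b => qclass stab (coord b)); split.
  exists (fun C => act (qrepr C) a0) => [b | C]; first by rewrite qrepr_act coordE.
  have [m ->] := qclass_surj C.
  by apply: qclass_eq; rewrite coordE qrepr_act.
move=> m b; apply: qclass_eq.
by rewrite coordE act_mul qrepr_act coordE.
Qed.

End Stabiliser.

Theorem theorem3p12 (M : finMonoid) (A : Type) (act : M -> A -> A) :
  is_left_action act -> filtered act ->
  exists K : {set M}, [/\ F_submonoid K, saturated K &
    exists f : A -> quotK K, bijective f /\
      (forall (m : M) (a : A), f (act m a) = qact m (f a))].
Proof.
move=> [act_one act_mul] filt.
have [a0 generates] := filtered_generator act_mul filt.
exists (stab act a0); split.
- exact: (stab_F_submonoid act_one act_mul filt generates).
- exact: (@stab_saturated _ _ _ act_mul a0).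
- exact: (orbit_iso act_mul filt generates).
Qed.
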